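(* Let $n\ge1$, let $H(\mathbf{q},\mathbf{p})=p^2/2-1/q$ on $\mathbb{R}^n\times\mathbb{R}^n$, and let $P_-=\{(\mathbf{q},\mathbf{p}):\mathbf{q}\neq\mathbf{o},\ H(\mathbf{q},\mathbf{p})<0\}$. On $P_-$ define $L_{ij}=q_ip_j-q_jp_i$ for $i,j=1,\dots,n$, the Lenz vector $\mathbf{K}=(p^2-1/q)\mathbf{q}-(\mathbf{q}\cdot\mathbf{p})\mathbf{p}$, and \[ L_{i(n+1)}=-L_{(n+1)i}=\frac{K_i}{\sqrt{-2H}}\quad(i=1,\dots,n),\qquad L_{(n+1)(n+1)}=0. \] Let $\Phi_{LS}:P_-\to T_-=\{(\mathbf{r},\mathbf{s})\in T^{\ast}S^n: \mathbf{r}\neq(0,\dots,0,1),\ \mathbf{s}\neq0\}$ be the Ligon--Schaaf map $\Phi_{LS}(\mathbf{q},\mathbf{p})=(\mathbf{r},\mathbf{s})$, where \[ \mathbf{r}=(\cos v_{n+1})\mathbf{u}+(\sin v_{n+1})\mathbf{v},\qquad \mathbf{s}=\frac{(-\sin v_{n+1})\mathbf{u}+(\cos v_{n+1})\mathbf{v}}{\sqrt{-2H}}, \] with \[ \mathbf{u}=\big(\sqrt{-2H}\,q\,\mathbf{p},\ qp^2-1\big),\qquad \mathbf{v}=\big(-\mathbf{q}/q+(\mathbf{q}\cdot\mathbf{p})\mathbf{p},\ -\sqrt{-2H}\,(\mathbf{q}\cdot\mathbf{p})\big)\in\mathbb{R}^{n+1}, \] and $v_{n+1}=-\sqrt{-2H}\,(\mathbf{q}\cdot\mathbf{p})$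 the last coordinate of $\mathbf{v}$. For $i,j=1,\dots,n+1$ let $M_{ij}=r_is_j-r_js_i$ be the components of angular momentum $\mathbf{r}\wedge\mathbf{s}$ on $\mathbb{R}^{n+1}\times\mathbb{R}^{n+1}$. Then \[ M_{ij}\circ\Phi_{LS}=L_{ij}\qquad\text{for all } i,j=1,\dots,n+1. \] In particular, on $P_-$ one has $\{L_{ij},L_{jk}\}=L_{ki}$, and $\{L_{ij},L_{kl}\}=0$ whenever $\#\{i,j,k,l\}\neq3$, for $i,j,k,l=1,\dots,n+1$; and $\Phi_{LS}$ intertwines the two infinitesimal Hamiltonian actions of $\mathfrak{so}(n+1)$ (generated by the $L_{ij}$ on $P_-$ and by the $M_{ij}$ on $T_-$).
   Context: Vectors are bold; $\mathbf{a}\cdot\mathbf{b}$ is the Euclidean inner product, $a^2=\mathbf{a}\cdot\mathbf{a}$, $q=|\mathbf{q}|$, and $\mathbf{o}$ is the origin. $T^{\ast}S^n$ is identified with $\{(\mathbf{r},\mathbf{s})\in\mathbb{R}^{n+1}\times\mathbb{R}^{n+1}:\mathbf{r}\cdot\mathbf{r}=1,\ \mathbf{r}\cdot\mathbf{s}=0\}$. The phase space $\mathbb{R}^n\times\mathbb{R}^n$ carries the symplectic form $\sum dq_k\wedge dp_k$ and Poisson bracket $\{f,g\}=\sum_k\big(\frac{\partial f}{\partial q_k}\frac{\partial g}{\partial p_k}-\frac{\partial f}{\partial p_k}\frac{\partial g}{\partial q_k}\big)$; similarly $T^{\ast}S^n$ carries the restriction of $\sum_{k=1}^{n+1}dr_k\wedge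 ds_k$. *)

From Stdlib Require Import Reals Lra Lia List Arith.
From Coquelicot Require Import Coquelicot.
Open Scope R_scope.

(* Vectors of R^N are represented as functions nat -> R; only the
   coordinates 0..N-1 are meaningful.  The paper's index k (1-based)
   corresponds to k-1 here; the paper's index n+1 is index n here. *)
Definition vec := nat -> R.

Fixpoint sumR (N : nat) (f : nat -> R) : R :=
  match N with O => 0 | S m => sumR m f + f m end.

Definition dotR (N : nat) (a b : vec) : R := sumR N (fun k => a k * b k).
Definition vnorm (N : nat) (a : vec) : R := sqrt (dotR N a a).

Definition kepH (n : nat) (q p : vec) : R := dotR n p p / 2 - 1 / vnorm n q.

Definition in_Pminus (n : nat) (q p : vec) : Prop :=
  ~ (forall k, (k < n)%nat -> q k = 0) /\ kepH n q p < 0.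

Definition lenzK (n : nat) (q p : vec) (i : nat) : R :=
  (dotR n p p - 1 / vnorm n q) * q i - dotR n q p * p i.

Definition Lfun (n : nat) (q p : vec) (i j : nat) : R :=
  if Nat.ltb i n then
    (if Nat.ltb j n then q i * p j - q j * p i
     else lenzK n q p i / sqrt (- 2 * kepH n q p))
  else
    (if Nat.ltb j n then - (lenzK n q p j / sqrt (- 2 * kepH n q p))
     else 0).

Definition LS_u (n : nat) (q p : vec) : vec := fun k =>
  if Nat.ltb k n then sqrt (- 2 * kepH n q p) * vnorm n q * p k
  else vnorm n q * dotR n p p - 1.

Definition LS_v (n : nat) (q p : vec) : vec := fun k =>
  if Nat.ltb k n then - (q k / vnorm n q) + dotR n q p * p k
  else - (sqrt (- 2 * kepH n q p) * dotR n q p).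

Definition LS_vlast (n : nat) (q p : vec) : R :=
  - (sqrt (- 2 * kepH n q p) * dotR n q p).

Definition Phi_LS (n : nat) (q p : vec) : vec * vec :=
  let w := LS_vlast n q p in
  let u := LS_u n q p in
  let v := LS_v n q p in
  (fun k => cos w * u k + sin w * v k,
   fun k => (- sin w * u k + cos w * v k) / sqrt (- 2 * kepH n q p)).

Definition Mfun (r s : vec) (i j : nat) : R := r i * s j - r j * s i.

Definition shiftv (x : vec) (k : nat) (t : R) : vec :=
  fun m => if Nat.eqb m k then x m + t else x m.

Definition vaddt (x : vec) (t : R) (d : vec) : vec := fun m => x m + t * d m.

Definition dqF (F : vec -> vec -> R) (k : nat) (x y : vec) : R :=
  Derive (fun t => F (shiftv x k t) y) 0.
Definition dpF (F : vec -> vec -> R) (k : nat) (x y : vec) : R :=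
  Derive (fun t => F x (shiftv y k t)) 0.

Definition poisson (N : nat) (f g : vec -> vec -> R) (x y : vec) : R :=
  sumR N (fun k => dqF f k x y * dpF g k x y - dpF f k x y * dqF g k x y).

Definition hamvf (F : vec -> vec -> R) (x y : vec) : vec * vec :=
  (fun k => dpF F k x y, fun k => - dqF F k x y).

Definition ndistinct4 (i j k l : nat) : nat :=
  length (nodup Nat.eq_dec (i :: j :: k :: l :: nil)).

From Stdlib Require Import Reals Lra Lia FunctionalExtensionality.
From Coquelicot Require Import Coquelicot.
Open Scope R_scope.

(* Write Q = |q| and c = sqrt(-2H), so that p^2 = 2/Q - c^2 on P_-.  The map
   Phi_LS rotates the pair (u, v) by the angle v_{n+1} and divides the second
   vector by c; a rotation preserves the wedge u /\ v, so
   M_ij o Phi_LS = (u_i v_j - u_j v_i) / c, which the relation p^2 = 2/Q - c^2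
   turns into L_ij.  For the bracket relations and the intertwining property,
   the derivatives of Q, q.p, p^2 and c along an arbitrary line
   t |-> (q + t a, p + t b) give the gradients of every L_ij and the
   derivative of Phi_LS; each identity is then a rational identity in Q, c,
   q.p and the coordinates of q and p, checked case by case on whether the
   indices equal n (the paper's n+1). *)

Lemma sumR_ext N f g : (forall k, (k < N)%nat -> f k = g k) -> sumR N f = sumR N g.
Proof. induction N as [|N IH]; simpl; intros H; auto. rewrite IH, H; auto. Qed.

Lemma sumR_add N f g : sumR N (fun k => f k + g k) = sumR N f + sumR N g.
Proof. induction N as [|N IH]; simpl; [ring | rewrite IH; ring]. Qed.

Lemma sumR_scal N c f : sumR N (fun k => c * f k) = c * sumR N f.
Proof. induction N as [|N IH]; simpl; [ring | rewrite IH; ring]. Qed.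

Lemma sumR_eq0 N f : (forall k, (k < N)%nat -> f k = 0) -> sumR N f = 0.
Proof. induction N as [|N IH]; simpl; intros H; auto. rewrite IH, H; auto. ring. Qed.

Definition unitv (i : nat) : vec := fun m => if Nat.eqb m i then 1 else 0.

Lemma sumR_mul_unitv N i f : (i < N)%nat -> sumR N (fun k => f k * unitv i k) = f i.
Proof.
  induction N as [|N IH]; intros Hi; [lia|]. simpl. unfold unitv in *.
  destruct (Nat.eq_dec i N) as [->|HiN].
  - rewrite Nat.eqb_refl, sumR_eq0; [ring|].
    intros k Hk. rewrite (proj2 (Nat.eqb_neq k N)) by lia. ring.
  - rewrite IH by lia. rewrite (proj2 (Nat.eqb_neq N i)) by lia. ring.
Qed.

Lemma dotR_comm N x y : dotR N x y = dotR N y x.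
Proof. unfold dotR. apply sumR_ext. intros; ring. Qed.

Lemma dotR_ext N x y x' y' : (forall k, (k < N)%nat -> x k = x' k) ->
  (forall k, (k < N)%nat -> y k = y' k) -> dotR N x y = dotR N x' y'.
Proof. intros Hx Hy. unfold dotR. apply sumR_ext. intros k Hk. rewrite Hx, Hy; auto. Qed.

Lemma dotR_vaddt N x y a b t : dotR N (vaddt x t a) (vaddt y t b) =
  dotR N x y + t * (dotR N x b + dotR N a y) + t * t * dotR N a b.
Proof. unfold dotR, vaddt. induction N as [|N IH]; simpl; [ring | rewrite IH; ring]. Qed.

Lemma dotR_unitv_r N x k : (k < N)%nat -> dotR N x (unitv k) = x k.
Proof. intros Hk. apply sumR_mul_unitv, Hk. Qed.

Lemma dotR_0_r N x : dotR N x (fun _ => 0) = 0.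
Proof. apply sumR_eq0. intros; ring. Qed.

(* The gradients of the L_ij all lie in the span of q, p and two coordinate vectors. *)
Definition lincomb (x y : vec) (al be ga de : R) (i j : nat) : vec :=
  fun m => al * x m + be * y m + ga * unitv i m + de * unitv j m.

Lemma dotR_lincomb_r N w x y al be ga de i j : (i < N)%nat -> (j < N)%nat ->
  dotR N w (lincomb x y al be ga de i j)
  = al * dotR N w x + be * dotR N w y + ga * w i + de * w j.
Proof.
  intros Hi Hj. unfold dotR, lincomb.
  rewrite (sumR_ext N _ (fun k => (al * (w k * x k) + be * (w k * y k))
                                  + (ga * (w k * unitv i k) + de * (w k * unitv j k))))
    by (intros; ring).
  rewrite !sumR_add, !sumR_scal, !sumR_mul_unitv by auto. ring.
Qed.

Lemma dotR_lincomb_l N w x y al be ga de i j : (i < N)%nat -> (j < N)%nat ->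
  dotR N (lincomb x y al be ga de i j) w
  = al * dotR N x w + be * dotR N y w + ga * w i + de * w j.
Proof.
  intros. rewrite dotR_comm, dotR_lincomb_r, (dotR_comm N w x), (dotR_comm N w y); auto.
Qed.

Lemma dotR_self_ge0 N x : 0 <= dotR N x x.
Proof. unfold dotR; induction N; simpl; nra. Qed.

Lemma dotR_self_eq0 N x : dotR N x x = 0 -> forall k, (k < N)%nat -> x k = 0.
Proof.
  induction N as [|N IH]; intros H k Hk; [lia|].
  pose proof (dotR_self_ge0 N x) as Hge. unfold dotR in *; simpl in H.
  assert (HN : x N * x N = 0) by nra.
  destruct (Nat.eq_dec k N) as [->|HkN]; [nra|].
  apply IH; [nra | lia].
Qed.

Lemma dotR_self_gt0 N x : ~ (forall k, (k < N)%nat -> x k = 0) -> 0 < dotR N x x.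
Proof.
  intros Hx. destruct (Rle_lt_or_eq_dec _ _ (dotR_self_ge0 N x)) as [H|H]; auto.
  exfalso. apply Hx, dotR_self_eq0. auto.
Qed.

Lemma vnorm_mul_self N x : vnorm N x * vnorm N x = dotR N x x.
Proof. apply sqrt_sqrt, dotR_self_ge0. Qed.

Lemma vaddt_0 x d : vaddt x 0 d = x.
Proof. extensionality m. unfold vaddt. ring. Qed.

Lemma vaddt_0_dir x t : vaddt x t (fun _ => 0) = x.
Proof. extensionality m. unfold vaddt. ring. Qed.

Lemma shiftv_vaddt x m t : shiftv x m t = vaddt x t (unitv m).
Proof. extensionality k. unfold shiftv, vaddt, unitv. destruct (Nat.eqb k m); ring. Qed.

Section Pminus.
Variables (n : nat) (q p : vec).
Hypothesis hP : in_Pminus n q p.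

Lemma Pminus_vnorm_gt0 : 0 < vnorm n q.
Proof. apply sqrt_lt_R0, dotR_self_gt0, (proj1 hP). Qed.

Lemma Pminus_sqrtE_gt0 : 0 < sqrt (-2 * kepH n q p).
Proof. apply sqrt_lt_R0. destruct hP. lra. Qed.

Lemma Pminus_energy :
  dotR n p p = 2 / vnorm n q - sqrt (-2 * kepH n q p) * sqrt (-2 * kepH n q p).
Proof.
  pose proof Pminus_vnorm_gt0. destruct hP as [_ HH].
  rewrite sqrt_sqrt by lra. unfold kepH. field. lra.
Qed.
End Pminus.

(* Reduce a goal about a point of P_- to a rational identity in Q = |q|,
   c = sqrt(-2H), q.p and the coordinates of q and p. *)
Ltac kepler_normalize hP :=
  lazymatch type of hP with in_Pminus ?n ?q ?p =>
    let HQ := fresh "HQ" in let Hc := fresh "Hc" in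
    let Q := fresh "Q" in let c := fresh "c" in
    pose proof (Pminus_vnorm_gt0 n q p hP) as HQ;
    pose proof (Pminus_sqrtE_gt0 n q p hP) as Hc;
    rewrite ?(dotR_comm n p q), <- ?(vnorm_mul_self n q), ?(Pminus_energy n q p hP);
    set (Q := vnorm n q) in *; set (c := sqrt (-2 * kepH n q p)) in *
  end.

Section AlongLine.
Variables (n : nat) (q p a b : vec).
Hypothesis hP : in_Pminus n q p.

Definition qnorm_along t := vnorm n (vaddt q t a).
Definition qp_along t := dotR n (vaddt q t a) (vaddt p t b).
Definition pp_along t := dotR n (vaddt p t b) (vaddt p t b).
Definition sqrtE_along t := sqrt (-2 * kepH n (vaddt q t a) (vaddt p t b)).

Lemma qnorm_along_0 : qnorm_along 0 = vnorm n q.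
Proof. unfold qnorm_along; rewrite vaddt_0; auto. Qed.
Lemma qp_along_0 : qp_along 0 = dotR n q p.
Proof. unfold qp_along; rewrite !vaddt_0; auto. Qed.
Lemma pp_along_0 : pp_along 0 = dotR n p p.
Proof. unfold pp_along; rewrite !vaddt_0; auto. Qed.
Lemma sqrtE_along_0 : sqrtE_along 0 = sqrt (-2 * kepH n q p).
Proof. unfold sqrtE_along; rewrite !vaddt_0; auto. Qed.

Lemma is_derive_qnorm_along : is_derive qnorm_along 0 (dotR n q a / vnorm n q).
Proof.
  pose proof (Pminus_vnorm_gt0 n q p hP) as HQ.
  pose proof (vnorm_mul_self n q) as HQ2.
  apply is_derive_ext with (f := fun t => sqrt (dotR n q q
    + t * (dotR n q a + dotR n q a) + t * t * dotR n a a)).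
  { intro t. unfold qnorm_along, vnorm. rewrite dotR_vaddt, (dotR_comm n a q). auto. }
  auto_derive; rewrite !Rmult_0_l, !Rplus_0_r, <- HQ2; [nra|].
  rewrite sqrt_square by lra. field. lra.
Qed.

Lemma is_derive_qp_along : is_derive qp_along 0 (dotR n q b + dotR n p a).
Proof.
  apply is_derive_ext with (f := fun t => dotR n q p
    + t * (dotR n q b + dotR n p a) + t * t * dotR n a b).
  { intro t. unfold qp_along. rewrite dotR_vaddt, (dotR_comm n a p). auto. }
  auto_derive; auto. ring.
Qed.

Lemma is_derive_pp_along : is_derive pp_along 0 (2 * dotR n p b).
Proof.
  apply is_derive_ext with (f := fun t => dotR n p p
    + t * (dotR n p b + dotR n p b) + t * t * dotR n b b).
  { intro t. unfold pp_along. rewrite dotR_vaddt, (dotR_comm n b p). auto. }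
  auto_derive; auto. ring.
Qed.

Lemma is_derive_sqrtE_along : is_derive sqrtE_along 0
  (- (dotR n p b + dotR n q a / (vnorm n q * vnorm n q * vnorm n q))
   / sqrt (-2 * kepH n q p)).
Proof.
  pose proof (Pminus_vnorm_gt0 n q p hP) as HQ.
  pose proof (Pminus_sqrtE_gt0 n q p hP) as Hc.
  apply is_derive_ext with (f := fun t => sqrt (-2 * (pp_along t / 2 - 1 / qnorm_along t))).
  { reflexivity. }
  pose proof is_derive_qnorm_along as DQ. pose proof is_derive_pp_along as DC.
  auto_derive.
  - repeat split; [eexists; exact DC | eexists; exact DQ | rewrite qnorm_along_0; lra |].
    rewrite qnorm_along_0, pp_along_0. destruct hP as [_ Hk]. unfold kepH in Hk. lra.
  - replace (Derive (fun x => qnorm_along x) 0) with (dotR n q a / vnorm n q)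
      by (symmetry; apply is_derive_unique, DQ).
    replace (Derive (fun x => pp_along x) 0) with (2 * dotR n p b)
      by (symmetry; apply is_derive_unique, DC).
    rewrite qnorm_along_0, pp_along_0.
    replace (-2 * (dotR n p p * / 2 + - (1 * / vnorm n q))) with (-2 * kepH n q p)
      by (unfold kepH; field; lra).
    field. lra.
Qed.
End AlongLine.

(* After [auto_derive] on an expression built from the four functions above,
   discharge their differentiability and replace their derivatives and values at 0. *)
Ltac along_derivable hP :=
  repeat match goal with
  | |- _ /\ _ => split
  | |- True => exact I
  | |- ex_derive (fun x => qnorm_along _ _ _ x) 0 =>
      eexists; apply (is_derive_qnorm_along _ _ _ _ hP)
  | |- ex_derive (fun x => qp_along _ _ _ _ _ x) 0 => eexists; apply is_derive_qp_along
  | |- ex_derive (fun x => pp_along _ _ _ x) 0 => eexists; apply is_derive_pp_along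
  | |- ex_derive (fun x => sqrtE_along _ _ _ _ _ x) 0 =>
      eexists; apply (is_derive_sqrtE_along _ _ _ _ _ hP)
  end.

Ltac along_values := rewrite ?qnorm_along_0, ?qp_along_0, ?pp_along_0, ?sqrtE_along_0.

Ltac along_derivatives hP :=
  repeat match goal with
  | |- context [Derive ?f 0] =>
     match f with
     | (fun x => qnorm_along ?n ?q ?a x) =>
        replace (Derive f 0) with (dotR n q a / vnorm n q)
          by (symmetry; apply is_derive_unique, (is_derive_qnorm_along _ _ _ _ hP))
     | (fun x => qp_along ?n ?q ?p ?a ?b x) =>
        replace (Derive f 0) with (dotR n q b + dotR n p a)
          by (symmetry; apply is_derive_unique, is_derive_qp_along)
     | (fun x => pp_along ?n ?p ?b x) =>
        replace (Derive f 0) with (2 * dotR n p b)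
          by (symmetry; apply is_derive_unique, is_derive_pp_along)
     | (fun x => sqrtE_along ?n ?q ?p ?a ?b x) =>
        replace (Derive f 0) with (- (dotR n p b + dotR n q a
            / (vnorm n q * vnorm n q * vnorm n q)) / sqrt (-2 * kepH n q p))
          by (symmetry; apply is_derive_unique, (is_derive_sqrtE_along _ _ _ _ _ hP))
     end
  end.

Ltac simpl_idx :=
  repeat match goal with
  | H : (?x < ?y)%nat |- context [Nat.ltb ?x ?y] => rewrite (proj2 (Nat.ltb_lt x y) H)
  | |- context [Nat.ltb ?x ?x] => rewrite Nat.ltb_irrefl
  | |- context [Nat.eqb ?x ?x] => rewrite Nat.eqb_refl
  | H : ?x <> ?y |- context [Nat.eqb ?x ?y] => rewrite (proj2 (Nat.eqb_neq x y) H)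
  | H : ?y <> ?x |- context [Nat.eqb ?x ?y] =>
      rewrite (proj2 (Nat.eqb_neq x y) (not_eq_sym H))
  | H : (?x < ?y)%nat |- context [Nat.eqb ?x ?y] =>
      rewrite (proj2 (Nat.eqb_neq x y) (Nat.lt_neq _ _ H))
  | H : (?x < ?y)%nat |- context [Nat.eqb ?y ?x] =>
      rewrite (proj2 (Nat.eqb_neq y x) (not_eq_sym (Nat.lt_neq _ _ H)))
  end.

Ltac split_indices n :=
  repeat match goal with
  | H : (?x <= n)%nat |- _ => is_var x;
      let H' := fresh in destruct (Nat.lt_ge_cases x n) as [H'|H'];
      [clear H | assert (x = n) by lia; subst x; clear H H']
  end.

Section Gradients.
Variables (n : nat) (q p : vec).

Let Q := vnorm n q.
Let c := sqrt (-2 * kepH n q p).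
Let B := dotR n q p.
Let C := dotR n p p.
Let K i := (C - 1/Q) * q i - B * p i.

(* [s] times the q- and p-gradients of K_i / c; the sign [s = -1] serves L_{(n+1)i}. *)
Definition gradq_scaled_lenz (s : R) i : vec :=
  lincomb q p (s * (q i / (Q*Q*Q*c) + K i / (c*c*c*Q*Q*Q))) (s * (- p i / c))
    (s * ((C - 1/Q)/c)) 0 i i.
Definition gradp_scaled_lenz (s : R) i : vec :=
  lincomb q p (s * (- p i / c)) (s * (2 * q i / c + K i / (c*c*c))) (s * (- B / c)) 0 i i.

Definition gradq_L i j : vec :=
  if Nat.ltb i n then
    (if Nat.ltb j n then lincomb q p 0 0 (p j) (- p i) i j else gradq_scaled_lenz 1 i)
  else (if Nat.ltb j n then gradq_scaled_lenz (-1) j else lincomb q p 0 0 0 0 0 0).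
Definition gradp_L i j : vec :=
  if Nat.ltb i n then
    (if Nat.ltb j n then lincomb q p 0 0 (- q j) (q i) i j else gradp_scaled_lenz 1 i)
  else (if Nat.ltb j n then gradp_scaled_lenz (-1) j else lincomb q p 0 0 0 0 0 0).
End Gradients.

Lemma Derive_Lfun_along n q p a b i j :
  (1 <= n)%nat -> in_Pminus n q p -> (i <= n)%nat -> (j <= n)%nat ->
  Derive (fun t => Lfun n (vaddt q t a) (vaddt p t b) i j) 0 =
  dotR n (gradq_L n q p i j) a + dotR n (gradp_L n q p i j) b.
Proof.
  intros hn hP Hi Hj. unfold gradq_L, gradp_L, gradq_scaled_lenz, gradp_scaled_lenz.
  apply is_derive_unique.
  destruct (Nat.lt_ge_cases i n) as [Hi'|Hi']; destruct (Nat.lt_ge_cases j n) as [Hj'|Hj'].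
  - simpl_idx. rewrite !dotR_lincomb_l by lia.
    apply is_derive_ext with (f := fun t =>
      (q i + t * a i) * (p j + t * b j) - (q j + t * a j) * (p i + t * b i)).
    { intro t. unfold Lfun. simpl_idx. reflexivity. }
    auto_derive; auto. ring.
  - assert (j = n) by lia. subst j. simpl_idx. rewrite !dotR_lincomb_l by lia.
    apply is_derive_ext with (f := fun t => ((pp_along n p b t - 1 / qnorm_along n q a t)
      * (q i + t * a i) - qp_along n q p a b t * (p i + t * b i)) / sqrtE_along n q p a b t).
    { intro t. unfold Lfun. simpl_idx. reflexivity. }
    auto_derive; along_derivable hP; along_derivatives hP; along_values;
      kepler_normalize hP; [lra | lra | field; lra].
  - assert (i = n) by lia. subst i. simpl_idx. rewrite !dotR_lincomb_l by lia.
    apply is_derive_ext with (f := fun t => - (((pp_along n p b t - 1 / qnorm_along n q a t)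
      * (q j + t * a j) - qp_along n q p a b t * (p j + t * b j)) / sqrtE_along n q p a b t)).
    { intro t. unfold Lfun. simpl_idx. reflexivity. }
    auto_derive; along_derivable hP; along_derivatives hP; along_values;
      kepler_normalize hP; [lra | lra | field; lra].
  - assert (i = n) by lia. assert (j = n) by lia. subst i j. simpl_idx.
    rewrite !dotR_lincomb_l by lia.
    apply is_derive_ext with (f := fun _ => 0).
    { intro t. unfold Lfun. simpl_idx. reflexivity. }
    auto_derive; auto. ring.
Qed.

Lemma dqF_Lfun n q p i j m :
  (1 <= n)%nat -> in_Pminus n q p -> (i <= n)%nat -> (j <= n)%nat -> (m < n)%nat ->
  dqF (fun x y => Lfun n x y i j) m q p = gradq_L n q p i j m.
Proof.
  intros. unfold dqF.
  rewrite (Derive_ext _ (fun t => Lfun n (vaddt q t (unitv m)) (vaddt p t (fun _ => 0)) i j))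
    by (intro t; rewrite shiftv_vaddt, vaddt_0_dir; reflexivity).
  rewrite Derive_Lfun_along, dotR_unitv_r, dotR_0_r by auto. ring.
Qed.

Lemma dpF_Lfun n q p i j m :
  (1 <= n)%nat -> in_Pminus n q p -> (i <= n)%nat -> (j <= n)%nat -> (m < n)%nat ->
  dpF (fun x y => Lfun n x y i j) m q p = gradp_L n q p i j m.
Proof.
  intros. unfold dpF.
  rewrite (Derive_ext _ (fun t => Lfun n (vaddt q t (fun _ => 0)) (vaddt p t (unitv m)) i j))
    by (intro t; rewrite shiftv_vaddt, vaddt_0_dir; reflexivity).
  rewrite Derive_Lfun_along, dotR_unitv_r, dotR_0_r by auto. ring.
Qed.

Lemma poisson_Lfun n q p i j k l : (1 <= n)%nat -> in_Pminus n q p ->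
  (i <= n)%nat -> (j <= n)%nat -> (k <= n)%nat -> (l <= n)%nat ->
  poisson n (fun x y => Lfun n x y i j) (fun x y => Lfun n x y k l) q p =
  dotR n (gradq_L n q p i j) (gradp_L n q p k l)
  - dotR n (gradp_L n q p i j) (gradq_L n q p k l).
Proof.
  intros. unfold poisson.
  rewrite (sumR_ext _ _ (fun m => gradq_L n q p i j m * gradp_L n q p k l m
                                  + (-1) * (gradp_L n q p i j m * gradq_L n q p k l m)))
    by (intros m Hm; rewrite !dqF_Lfun, !dpF_Lfun by auto; ring).
  rewrite sumR_add, sumR_scal. unfold dotR. ring.
Qed.

Ltac expand_gradients :=
  unfold gradq_L, gradp_L, gradq_scaled_lenz, gradp_scaled_lenz; simpl_idx;
  rewrite ?dotR_lincomb_l, ?dotR_lincomb_r by lia;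
  unfold lincomb, unitv; simpl_idx.

Lemma poisson_Lfun_cyclic n (hn : (1 <= n)%nat) i j k :
  (i <= n)%nat -> (j <= n)%nat -> (k <= n)%nat -> i <> j -> j <> k -> k <> i ->
  forall q p, in_Pminus n q p ->
  poisson n (fun x y => Lfun n x y i j) (fun x y => Lfun n x y j k) q p = Lfun n q p k i.
Proof.
  intros Hi Hj Hk Hij Hjk Hki q p hP.
  rewrite poisson_Lfun by auto.
  split_indices n; try lia;
  expand_gradients; unfold Lfun, lenzK; simpl_idx; kepler_normalize hP; field; lra.
Qed.

Lemma poisson_Lfun_commute n (hn : (1 <= n)%nat) i j k l :
  (i <= n)%nat -> (j <= n)%nat -> (k <= n)%nat -> (l <= n)%nat ->
  ndistinct4 i j k l <> 3%nat ->
  forall q p, in_Pminus n q p ->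
  poisson n (fun x y => Lfun n x y i j) (fun x y => Lfun n x y k l) q p = 0.
Proof.
  intros Hi Hj Hk Hl H3 q p hP.
  rewrite poisson_Lfun by auto.
  unfold ndistinct4 in H3. simpl in H3.
  repeat (match type of H3 with context [Nat.eq_dec ?x ?y] =>
            destruct (Nat.eq_dec x y) end; simpl in H3);
  try (exfalso; apply H3; reflexivity); subst; clear H3;
  split_indices n; try (exfalso; congruence);
  expand_gradients; kepler_normalize hP; field; lra.
Qed.

Lemma Mfun_rotate (w c : R) (u v : vec) i j : c <> 0 ->
  Mfun (fun k => cos w * u k + sin w * v k) (fun k => (- sin w * u k + cos w * v k) / c) i j
  = (u i * v j - u j * v i) / c.
Proof.
  intros Hc. unfold Mfun. pose proof (sin2_cos2 w) as Hsc. unfold Rsqr in Hsc.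
  transitivity ((sin w * sin w + cos w * cos w) * (u i * v j - u j * v i) / c);
    [field; auto | rewrite Hsc; field; auto].
Qed.

Lemma LS_wedge n q p i j : in_Pminus n q p -> (i <= n)%nat -> (j <= n)%nat ->
  (LS_u n q p i * LS_v n q p j - LS_u n q p j * LS_v n q p i) / sqrt (-2 * kepH n q p)
  = Lfun n q p i j.
Proof.
  intros hP Hi Hj. unfold LS_u, LS_v, Lfun, lenzK.
  split_indices n; try (exfalso; congruence); simpl_idx; kepler_normalize hP; field; lra.
Qed.

Lemma Mfun_Phi_LS n q p i j : in_Pminus n q p -> (i <= n)%nat -> (j <= n)%nat ->
  Mfun (fst (Phi_LS n q p)) (snd (Phi_LS n q p)) i j = Lfun n q p i j.
Proof.
  intros hP Hi Hj. unfold Phi_LS; simpl.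
  rewrite Mfun_rotate by (apply Rgt_not_eq, (Pminus_sqrtE_gt0 _ _ _ hP)).
  apply LS_wedge; auto.
Qed.

Lemma is_derive_rotate_fst (W U V : R -> R) x dw du dv :
  is_derive W x dw -> is_derive U x du -> is_derive V x dv ->
  is_derive (fun t => cos (W t) * U t + sin (W t) * V t) x
    (cos (W x) * (du + dw * V x) + sin (W x) * (dv - dw * U x)).
Proof.
  intros HW HU HV.
  assert (DW : Derive (fun t => W t) x = dw) by (apply is_derive_unique; auto).
  assert (DU : Derive (fun t => U t) x = du) by (apply is_derive_unique; auto).
  assert (DV : Derive (fun t => V t) x = dv) by (apply is_derive_unique; auto).
  auto_derive.
  - repeat split; eexists; eauto.
  - rewrite DW, DU, DV. ring.
Qed.

Lemma is_derive_rotate_snd (W U V c : R -> R) x dw du dv dc :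
  is_derive W x dw -> is_derive U x du -> is_derive V x dv -> is_derive c x dc ->
  c x <> 0 ->
  is_derive (fun t => (- sin (W t) * U t + cos (W t) * V t) / c t) x
    ((- sin (W x) * (du + dw * V x) + cos (W x) * (dv - dw * U x)) / c x
     - dc * (- sin (W x) * U x + cos (W x) * V x) / (c x * c x)).
Proof.
  intros HW HU HV Hc Hc0.
  assert (DW : Derive (fun t => W t) x = dw) by (apply is_derive_unique; auto).
  assert (DU : Derive (fun t => U t) x = du) by (apply is_derive_unique; auto).
  assert (DV : Derive (fun t => V t) x = dv) by (apply is_derive_unique; auto).
  assert (Dc : Derive (fun t => c t) x = dc) by (apply is_derive_unique; auto).
  auto_derive.
  - repeat split; try (eexists; eauto); auto.
  - rewrite DW, DU, DV, Dc. field. auto.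
Qed.

Section DerivePhiLS.
Variables (n : nat) (q p a b : vec).
Hypothesis hP : in_Pminus n q p.

Let Q := vnorm n q.
Let c := sqrt (-2 * kepH n q p).
Let B := dotR n q p.
Let C := dotR n p p.
Let dQ := dotR n q a / Q.
Let dB := dotR n q b + dotR n p a.
Let dC := 2 * dotR n p b.
Let dc := - (dotR n p b + dotR n q a / (Q * Q * Q)) / c.
Let dw := - (dc * B + c * dB).

Definition dLS_u m :=
  if Nat.ltb m n then (dc * Q + c * dQ) * p m + c * Q * b m else dQ * C + Q * dC.
Definition dLS_v m :=
  if Nat.ltb m n then - (a m / Q) + q m * dQ / (Q * Q) + dB * p m + B * b m else dw.

Lemma is_derive_LS_vlast_along :
  is_derive (fun t => LS_vlast n (vaddt q t a) (vaddt p t b)) 0 dw.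
Proof.
  apply is_derive_ext with (f := fun t => - (sqrtE_along n q p a b t * qp_along n q p a b t));
    [reflexivity|].
  auto_derive; along_derivable hP; along_derivatives hP; along_values.
  unfold dw, dc, dB, B, c, Q. ring.
Qed.

Lemma is_derive_LS_u_along m : (m <= n)%nat ->
  is_derive (fun t => LS_u n (vaddt q t a) (vaddt p t b) m) 0 (dLS_u m).
Proof.
  intros Hm. unfold dLS_u, LS_u.
  destruct (Nat.lt_ge_cases m n) as [Hm'|Hm']; [|assert (m = n) by lia; subst m]; simpl_idx.
  - apply is_derive_ext with (f := fun t =>
      sqrtE_along n q p a b t * qnorm_along n q a t * (p m + t * b m)); [reflexivity|].
    auto_derive; along_derivable hP; along_derivatives hP; along_values.
    unfold dc, dQ, c, Q. ring.
  - apply is_derive_ext with (f := fun t => qnorm_along n q a t * pp_along n p b t - 1);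
      [reflexivity|].
    auto_derive; along_derivable hP; along_derivatives hP; along_values.
    unfold dQ, dC, C, Q. ring.
Qed.

Lemma is_derive_LS_v_along m : (m <= n)%nat ->
  is_derive (fun t => LS_v n (vaddt q t a) (vaddt p t b) m) 0 (dLS_v m).
Proof.
  intros Hm. unfold dLS_v, LS_v.
  destruct (Nat.lt_ge_cases m n) as [Hm'|Hm']; [|assert (m = n) by lia; subst m]; simpl_idx.
  - apply is_derive_ext with (f := fun t =>
      - ((q m + t * a m) / qnorm_along n q a t) + qp_along n q p a b t * (p m + t * b m));
      [reflexivity|].
    auto_derive; along_derivable hP; along_derivatives hP; along_values;
      unfold dQ, dB, B, Q; kepler_normalize hP; [lra | field; lra].
  - exact is_derive_LS_vlast_along.
Qed.

Lemma Derive_Phi_LS_fst m : (m <= n)%nat ->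
  Derive (fun t => fst (Phi_LS n (vaddt q t a) (vaddt p t b)) m) 0 =
  cos (LS_vlast n q p) * (dLS_u m + dw * LS_v n q p m)
  + sin (LS_vlast n q p) * (dLS_v m - dw * LS_u n q p m).
Proof.
  intros Hm. apply is_derive_unique.
  pose proof (is_derive_rotate_fst _ _ _ 0 _ _ _ is_derive_LS_vlast_along
    (is_derive_LS_u_along m Hm) (is_derive_LS_v_along m Hm)) as H.
  cbv beta in H. rewrite !vaddt_0 in H. exact H.
Qed.

Lemma Derive_Phi_LS_snd m : (m <= n)%nat ->
  Derive (fun t => snd (Phi_LS n (vaddt q t a) (vaddt p t b)) m) 0 =
  (- sin (LS_vlast n q p) * (dLS_u m + dw * LS_v n q p m)
   + cos (LS_vlast n q p) * (dLS_v m - dw * LS_u n q p m)) / c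
  - dc * (- sin (LS_vlast n q p) * LS_u n q p m + cos (LS_vlast n q p) * LS_v n q p m)
    / (c * c).
Proof.
  intros Hm. apply is_derive_unique.
  pose proof (is_derive_rotate_snd _ _ _ (sqrtE_along n q p a b) 0 _ _ _ _
    is_derive_LS_vlast_along (is_derive_LS_u_along m Hm) (is_derive_LS_v_along m Hm)
    (is_derive_sqrtE_along n q p a b hP)) as H.
  cbv beta in H. rewrite sqrtE_along_0, !vaddt_0 in H. apply H.
  apply Rgt_not_eq, (Pminus_sqrtE_gt0 _ _ _ hP).
Qed.
End DerivePhiLS.

Lemma dpF_Mfun r s i j m : dpF (fun r s => Mfun r s i j) m r s =
  r i * (if Nat.eqb j m then 1 else 0) - r j * (if Nat.eqb i m then 1 else 0).
Proof.
  unfold dpF, Mfun.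
  rewrite (Derive_ext _ (fun t => r i * (s j + t * (if Nat.eqb j m then 1 else 0))
                                - r j * (s i + t * (if Nat.eqb i m then 1 else 0))))
    by (intro t; unfold shiftv; destruct (Nat.eqb j m), (Nat.eqb i m); ring).
  apply is_derive_unique. auto_derive; auto. ring.
Qed.

Lemma dqF_Mfun r s i j m : dqF (fun r s => Mfun r s i j) m r s =
  (if Nat.eqb i m then 1 else 0) * s j - (if Nat.eqb j m then 1 else 0) * s i.
Proof.
  unfold dqF, Mfun.
  rewrite (Derive_ext _ (fun t => (r i + t * (if Nat.eqb i m then 1 else 0)) * s j
                                - (r j + t * (if Nat.eqb j m then 1 else 0)) * s i))
    by (intro t; unfold shiftv; destruct (Nat.eqb j m), (Nat.eqb i m); ring).
  apply is_derive_unique. auto_derive; auto. ring.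
Qed.

Lemma dotR_hamvf_Lfun_fst n q p i j x :
  (1 <= n)%nat -> in_Pminus n q p -> (i <= n)%nat -> (j <= n)%nat ->
  dotR n x (fst (hamvf (fun x y => Lfun n x y i j) q p)) = dotR n x (gradp_L n q p i j).
Proof. intros. apply dotR_ext; auto. intros. simpl. apply dpF_Lfun; auto. Qed.

Lemma dotR_hamvf_Lfun_snd n q p i j x :
  (1 <= n)%nat -> in_Pminus n q p -> (i <= n)%nat -> (j <= n)%nat ->
  dotR n x (snd (hamvf (fun x y => Lfun n x y i j) q p)) = - dotR n x (gradq_L n q p i j).
Proof.
  intros. transitivity (dotR n x (fun k => -1 * gradq_L n q p i j k)).
  - apply dotR_ext; auto. intros. simpl. rewrite dqF_Lfun; auto. ring.
  - unfold dotR. rewrite (sumR_ext _ _ (fun k => -1 * (x k * gradq_L n q p i j k)))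
      by (intros; ring).
    rewrite sumR_scal. ring.
Qed.

Lemma Phi_LS_intertwines n (hn : (1 <= n)%nat) i j q p :
  (i <= n)%nat -> (j <= n)%nat -> in_Pminus n q p ->
  let XL := hamvf (fun x y => Lfun n x y i j) q p in
  let XM := hamvf (fun r s => Mfun r s i j) (fst (Phi_LS n q p)) (snd (Phi_LS n q p)) in
  forall m, (m <= n)%nat ->
    Derive (fun t => fst (Phi_LS n (vaddt q t (fst XL)) (vaddt p t (snd XL))) m) 0
      = fst XM m
    /\
    Derive (fun t => snd (Phi_LS n (vaddt q t (fst XL)) (vaddt p t (snd XL))) m) 0
      = snd XM m.
Proof.
  intros Hi Hj hP XL XM m Hm. subst XL XM.
  rewrite Derive_Phi_LS_fst, Derive_Phi_LS_snd by auto.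
  unfold dLS_u, dLS_v.
  rewrite !dotR_hamvf_Lfun_fst, !dotR_hamvf_Lfun_snd by auto.
  unfold hamvf. cbn [fst snd]. rewrite dpF_Mfun, dqF_Mfun.
  unfold Phi_LS. cbn [fst snd].
  destruct (Nat.eq_dec i j); destruct (Nat.eq_dec i m); destruct (Nat.eq_dec j m); subst;
  try (exfalso; congruence); split_indices n; try (exfalso; congruence);
  simpl_idx; rewrite ?dpF_Lfun, ?dqF_Lfun by (auto; lia);
  expand_gradients; unfold LS_u, LS_v, LS_vlast; simpl_idx;
  kepler_normalize hP; split; field; lra.
Qed.

Theorem theorem4p1 (n : nat) (hn : (1 <= n)%nat) :
  (forall (q p : vec), in_Pminus n q p ->
     forall i j : nat, (i <= n)%nat -> (j <= n)%nat ->
       Mfun (fst (Phi_LS n q p)) (snd (Phi_LS n q p)) i j = Lfun n q p i j)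
  /\
  (forall i j k : nat, (i <= n)%nat -> (j <= n)%nat -> (k <= n)%nat ->
     i <> j -> j <> k -> k <> i ->
     forall (q p : vec), in_Pminus n q p ->
       poisson n (fun x y => Lfun n x y i j) (fun x y => Lfun n x y j k) q p
       = Lfun n q p k i)
  /\
  (forall i j k l : nat, (i <= n)%nat -> (j <= n)%nat -> (k <= n)%nat ->
     (l <= n)%nat -> ndistinct4 i j k l <> 3%nat ->
     forall (q p : vec), in_Pminus n q p ->
       poisson n (fun x y => Lfun n x y i j) (fun x y => Lfun n x y k l) q p = 0)
  /\
  (forall i j : nat, (i <= n)%nat -> (j <= n)%nat ->
     forall (q p : vec), in_Pminus n q p ->
       let XL := hamvf (fun x y => Lfun n x y i j) q p in
       let XM := hamvf (fun r s => Mfun r s i j)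
                   (fst (Phi_LS n q p)) (snd (Phi_LS n q p)) in
       forall m : nat, (m <= n)%nat ->
         Derive (fun t => fst (Phi_LS n (vaddt q t (fst XL)) (vaddt p t (snd XL))) m) 0
           = fst XM m
         /\
         Derive (fun t => snd (Phi_LS n (vaddt q t (fst XL)) (vaddt p t (snd XL))) m) 0
           = snd XM m).
Proof.
  split; [intros q p hP i j Hi Hj; apply Mfun_Phi_LS; auto|].
  split; [apply poisson_Lfun_cyclic; auto|].
  split; [apply poisson_Lfun_commute; auto|].
  intros i j Hi Hj q p hP. apply Phi_LS_intertwines; auto.
Qed.
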